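(* For any $\lambda>0$ and $n\ge 1$, $Z=\sum_{\sigma\in\Omega}\lambda^{-p(\sigma)}\geq(\sqrt{2}/\lambda)^{p_{max}}$, where $p_{max}=2n-2$.
   Context: Let $\Gamma$ be the triangular lattice. A configuration of $n$ particles is a set of $n$ vertices of $\Gamma$, considered up to translation. It is connected if the subgraph of $\Gamma$ induced by occupied vertices is connected; a hole is a maximal finite connected set of unoccupied vertices; $\Omega$ is the set of connected configurations of $n$ particles with no holes. For $\sigma\in\Omega$, $p(\sigma)$ is the length of the closed walk around its single external boundary, with an edge traversed twice counted twice. *)

From HB Require Import structures.
From mathcomp Require Import all_boot all_order all_algebra.
From mathcomp Require Import boolp.
Set Implicit Arguments. Unset Strict Implicit. Unset Printing Implicit Defensive.
Import Order.TTheory GRing.Theory Num.Theory.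

(* Vertices of the triangular lattice, in axial coordinates: (x,y) is the
   point x*(1,0) + y*(1/2, sqrt 3/2) of the plane. *)
Definition pt := (int * int)%type.

(* The six neighbour directions, in counterclockwise order
   (angles 0, 60, 120, 180, 240, 300 degrees); indices taken mod 6. *)
Definition dir (k : nat) : pt :=
  match (k %% 6)%N with
  | 0 => (1%R, 0%R)
  | 1 => (0%R, 1%R)
  | 2 => ((-1)%R, 1%R)
  | 3 => ((-1)%R, 0%R)
  | 4 => (0%R, (-1)%R)
  | _ => (1%R, (-1)%R)
  end.

Definition addp (p d : pt) : pt := ((p.1 + d.1)%R, (p.2 + d.2)%R).

Definition adj (p q : pt) : bool := [exists k : 'I_6, q == addp p (dir k)].

(* Configurations of n particles up to translation are represented by their
   unique translate whose minimal x-coordinate and minimal y-coordinate are 0.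
   A connected configuration of n particles then lies in [0,n-1]^2. *)
Definition Box (n : nat) := ('I_n * 'I_n)%type.

Definition emb n (a : Box n) : pt := (Posz (a.1 : nat), Posz (a.2 : nat)).

Definition occ n (A : {set Box n}) (p : pt) : bool := [exists a in A, emb a == p].

Definition normalized n (A : {set Box n}) : Prop :=
  (exists a, a \in A /\ (a.1 : nat) = 0%N) /\ (exists b, b \in A /\ (b.2 : nat) = 0%N).

Definition induced_rel n (A : {set Box n}) : rel (Box n) :=
  fun a b => [&& a \in A, b \in A & adj (emb a) (emb b)].

Definition config_connected n (A : {set Box n}) : Prop :=
  forall a b, a \in A -> b \in A -> connect (induced_rel A) a b.

Definition free_reach n (A : {set Box n}) (v w : pt) : Prop :=
  ~~ occ A v /\
  exists s : seq pt, path (fun x y => adj x y && ~~ occ A y) v s /\ last v s = w.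

(* A hole is a maximal finite connected set of unoccupied vertices, i.e. a
   finite connected component of the unoccupied vertices.  No holes: every
   unoccupied vertex lies in an infinite such component. *)
Definition hole_free n (A : {set Box n}) : Prop :=
  forall v : pt, ~~ occ A v ->
    ~ (exists s : seq pt, forall w, free_reach A v w -> w \in s).

Definition inOmega n (A : {set Box n}) : Prop :=
  #|A| = n /\ normalized A /\ config_connected A /\ hole_free A.

(* ---- Perimeter: the closed walk around the external boundary ----
   Face tracing in the plane embedding: arriving at v along the directed
   edge (u,v), the walk continues to the first occupied neighbour of v met
   when rotating counterclockwise around v starting from the direction of u
   (so the traced face stays on the right-hand side). *)
Definition back (v u : pt) : nat := find (fun k => u == addp v (dir k)) (iota 0 6).

Definition nextdir n (A : {set Box n}) (v : pt) (k : nat) : nat :=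
  (k + (find (fun i => occ A (addp v (dir (k + i)))) (iota 1 6)).+1)%N.

Definition next_edge n (A : {set Box n}) (e : pt * pt) : pt * pt :=
  (e.2, addp e.2 (dir (nextdir A e.2 (back e.2 e.1)))).

Definition low_vertex n (A : {set Box n}) : option (Box n) :=
  [pick a in A | [forall b in A,
     ((a.2 : nat) < b.2)%N || (((a.2 : nat) == b.2) && ((a.1 : nat) <= b.1)%N)]].

(* At the lowest-leftmost vertex v0 the directions 180,240,300 degrees lead to
   unoccupied vertices, and the outer face lies there; the first occupied
   neighbour counterclockwise from direction 300 degrees gives a directed
   edge of the external boundary walk (outer face on its right). *)
Definition start_edge n (A : {set Box n}) (v0 : Box n) : pt * pt :=
  (emb v0, addp (emb v0) (dir (nextdir A (emb v0) 5))).

(* p(sigma): length of the closed boundary walk = length of the orbit of the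
   start edge under face tracing (edges traversed twice counted twice);
   0 when there is no edge (single particle).  Orbit length <= #directed edges <= 6n. *)
Definition perim n (A : {set Box n}) : nat :=
  match low_vertex A with
  | None => 0%N
  | Some v0 =>
      let e0 := start_edge A v0 in
      if occ A e0.2 then
        (find (fun k => iter k.+1 (next_edge A) e0 == e0) (iota 0 (6 * #|A|))).+1
      else 0%N
  end.

From HB Require Import structures.
From mathcomp Require Import all_boot all_order all_algebra.
From mathcomp Require Import boolp reals.
From mathcomp Require Import zify.
Import Order.TTheory GRing.Theory Num.Theory.

(* For a word [f] of [m] bits, the staircase of [m + 1] particles whose
   [i]-th step goes in direction 0 or 60 degrees according to [f i] is
   connected and has no holes, and its boundary walk runs along the chain and
   back, so it has perimeter [2 m]. These [2 ^ m] configurations are distinct,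
   so [Z >= 2 ^ m * lam ^- (2 m) = (sqrt 2 / lam) ^+ (2 n - 2)] for [n = m + 1]. *)

Lemma find_iota0_min (p : pred nat) L k : (k < L)%N -> p k ->
  (forall i, (i < k)%N -> ~~ p i) -> find p (iota 0 L) = k.
Proof.
move=> lt_kL p_k before_k.
have has_p : has p (iota 0 L) by apply/hasP; exists k; rewrite ?mem_iota.
have lt_find : (find p (iota 0 L) < L)%N.
  by rewrite -[X in (_ < X)%N](size_iota 0 L) -has_find.
case: (ltngtP (find p (iota 0 L)) k) => // [lt_find_k | lt_k_find].
  by have := nth_find 0 has_p; rewrite nth_iota // add0n (negbTE (before_k _ lt_find_k)).
by have := before_find 0 lt_k_find; rewrite nth_iota // add0n p_k.
Qed.

Lemma ler_sum_inj (R : numDomainType) (I J : finType) (g : I -> J) (P : pred J)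
    (F : J -> R) :
  injective g -> (forall i, P (g i)) -> (forall j, P j -> 0 <= F j)%R ->
  (\sum_i F (g i) <= \sum_(j | P j) F j)%R.
Proof.
move=> g_inj P_g F_ge0; rewrite -(big_imset _ (in2W g_inj)) /=.
have -> : (\sum_(j in g @: I) F j = \sum_(j | P j && (j \in g @: I)) F j)%R.
  apply: eq_bigl => j; case: (boolP (j \in g @: I)) => [/imsetP[i _ ->]|_].
    by rewrite P_g.
  by rewrite andbF.
rewrite [leRHS](bigID (mem (g @: I))) /= lerDl sumr_ge0 // => j /andP[P_j _].
exact: F_ge0.
Qed.

Lemma dir_modn k : dir (k %% 6) = dir k.
Proof. by rewrite /dir modn_mod. Qed.

Lemma dir_inj i j : (i < 6)%N -> (j < 6)%N -> dir i = dir j -> i = j.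
Proof.
by case: i => [|[|[|[|[|[|i]]]]]]; case: j => [|[|[|[|[|[|j]]]]]] //= _ _ [].
Qed.

Lemma addpI v : injective (addp v).
Proof.
case=> [a b] [c d]; rewrite /addp /= => -[h1 h2].
by congr pair; [apply: (addrI v.1 h1) | apply: (addrI v.2 h2)].
Qed.

Lemma eq_addp_dir v i j : (addp v (dir i) == addp v (dir j)) = (i %% 6 == j %% 6).
Proof.
apply/eqP/eqP => [/addpI|eq_ij]; last by rewrite -dir_modn eq_ij dir_modn.
by rewrite -(dir_modn i) -(dir_modn j); apply: dir_inj; apply: ltn_pmod.
Qed.

Lemma back_addp_dir v k : (k < 6)%N -> back v (addp v (dir k)) = k.
Proof.
move=> lt_k6; rewrite /back (@eq_find _ _ (fun i => i %% 6 == k)).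
  by case: k lt_k6 => [|[|[|[|[|[|k]]]]]].
by move=> i; rewrite eq_addp_dir (modn_small lt_k6) eq_sym.
Qed.

Section TwoNeighbours.

Variables (n : nat) (A : {set Box n}) (v : pt) (b c : nat).
Hypothesis occ_nbrs :
  forall k, occ A (addp v (dir k)) = (k %% 6 == b) || (k %% 6 == c).

Lemma nextdir_two_nbrs k :
  nextdir A v k =
  (k + (find (fun i => ((k + i) %% 6 == b) || ((k + i) %% 6 == c)) (iota 1 6)).+1)%N.
Proof. by rewrite /nextdir (eq_find (fun i => occ_nbrs (k + i))). Qed.

(* With [b = c] this is the turn-around at a dead end. *)
Lemma next_edge_two_nbrs : (b < 6)%N -> (c < 6)%N ->
  next_edge A (addp v (dir b), v) = (v, addp v (dir c)).
Proof.
move=> lt_b6 lt_c6; rewrite /next_edge /= back_addp_dir // nextdir_two_nbrs.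
congr (_, addp v _).
by case: b lt_b6 => [|[|[|[|[|[|?]]]]]] // _; case: c lt_c6 => [|[|[|[|[|[|?]]]]]].
Qed.

End TwoNeighbours.

Definition shift (v d : pt) (t : nat) : pt :=
  (v.1 + (Posz t) * d.1, v.2 + (Posz t) * d.2)%R.

Lemma shift0 v d : shift v d 0 = v.
Proof. by case: v => x y; rewrite /shift /= !mul0r !addr0. Qed.

Lemma shiftS v d t : shift v d t.+1 = addp (shift v d t) d.
Proof.
by rewrite /shift /addp /=; congr pair; rewrite -addn1 PoszD mulrDl mul1r addrA.
Qed.

Lemma shift_dir_inj v k : injective (shift v (dir k)).
Proof.
move=> t t'; rewrite /shift -dir_modn => -[/addrI eq1 /addrI eq2].
by move: eq1 eq2; case: (k %% 6) (@ltn_pmod k 6 isT) => [|[|[|[|[|[|?]]]]]] //= _; lia.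
Qed.

Lemma free_reach_ray n (A : {set Box n}) v k :
  (forall t, ~~ occ A (shift v (dir k) t)) ->
  forall t, free_reach A v (shift v (dir k) t).
Proof.
move=> ray_free t; split; first by rewrite -(shift0 v (dir k)).
exists [seq shift v (dir k) i | i <- iota 1 t].
suff walk j : path (fun x y => adj x y && ~~ occ A y) (shift v (dir k) j)
                [seq shift v (dir k) i | i <- iota j.+1 t] /\
              last (shift v (dir k) j) [seq shift v (dir k) i | i <- iota j.+1 t]
                = shift v (dir k) (j + t).
  by have := walk 0%N; rewrite shift0.
elim: t j => [|t IH] j; first by rewrite addn0.
have [path_j last_j] := IH j.+1; rewrite /= ray_free path_j last_j addSnnS.
split=> //; rewrite !andbT; apply/existsP; exists (inord (k %% 6)).
by rewrite inordK ?ltn_pmod // dir_modn shiftS.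
Qed.

(* A free ray is an infinite connected set of free vertices. *)
Lemma hole_free_rays n (A : {set Box n}) :
  (forall v, ~~ occ A v -> exists k, forall t, ~~ occ A (shift v (dir k) t)) ->
  hole_free A.
Proof.
move=> rays v v_free [s reach_s]; have [k ray_free] := rays v v_free.
have := @uniq_leq_size _ [seq shift v (dir k) i | i <- iota 0 (size s).+1] s.
rewrite map_inj_uniq ?iota_uniq; last exact: shift_dir_inj.
rewrite size_map size_iota ltnn => /(_ isT) absurd; suff: false by []; apply: absurd.
by move=> _ /mapP[t _ ->]; apply: reach_s; apply: free_reach_ray.
Qed.

Fixpoint stair_x (f : nat -> bool) (k : nat) : nat :=
  if k is k'.+1 then (stair_x f k' + ~~ f k')%N else 0%N.

Fixpoint stair_y (f : nat -> bool) (k : nat) : nat :=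
  if k is k'.+1 then (stair_y f k' + f k')%N else 0%N.

Definition stair f k : pt := (Posz (stair_x f k), Posz (stair_y f k)).

Lemma stair_xy f k : (stair_x f k + stair_y f k)%N = k.
Proof. by elim: k => //= k IH; case: (f k); rewrite ?addn0 ?addn1; lia. Qed.

Lemma stairS f k : stair f k.+1 = addp (stair f k) (dir (f k)).
Proof.
rewrite /stair /addp /=; case: (f k) => /=; rewrite ?addn0 ?addn1;
by congr pair; rewrite ?addr0 // -addn1.
Qed.

Lemma stair_pred f k : stair f k = addp (stair f k.+1) (dir (f k + 3)).
Proof.
rewrite /stair /addp /=; case: (f k) => /=; rewrite ?addn0 ?addn1;
by congr pair; rewrite ?addr0 //; lia.
Qed.

Lemma stair_inj f : injective (stair f).
Proof. by move=> j k [eq_x eq_y]; rewrite -(stair_xy f j) -(stair_xy f k) eq_x eq_y. Qed.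

(* Every step raises [x + y] by one, so lattice neighbours on the staircase
   are consecutive. *)
Lemma stair_nbr f j k e : stair f k = addp (stair f j) (dir e) ->
  (k = j.+1 /\ e %% 6 = f j) \/ (j = k.+1 /\ e %% 6 = (f k + 3)%N).
Proof.
rewrite -dir_modn; have := stair_xy f j; have := stair_xy f k.
case: (e %% 6) (@ltn_pmod e 6 isT) => [|[|[|[|[|[|?]]]]]] //= _ sum_k sum_j;
  rewrite /stair /addp /= => -[eq_x eq_y].
1,2: have eq_k : k = j.+1 by lia.
1,2: by subst k; left; move: eq_x eq_y => /=; case: (f j) => /=; lia.
1,4: have eq_kj : k = j by lia.
1,2: by subst k; lia.
all: have eq_j : j = k.+1 by lia.
all: by subst j; right; move: eq_x eq_y => /=; case: (f k) => /=; lia.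
Qed.

Lemma adj_stairS f k : adj (stair f k) (stair f k.+1).
Proof. by apply/existsP; exists (inord (f k)); rewrite inordK ?stairS //; case: (f k). Qed.

Lemma adj_stair_pred f k : adj (stair f k.+1) (stair f k).
Proof.
by apply/existsP; exists (inord (f k + 3)); rewrite inordK -?stair_pred //; case: (f k).
Qed.

Section Chain.

Variables (f : nat -> bool) (m : nat).

Definition chain_node k : Box m.+1 := (inord (stair_x f k), inord (stair_y f k)).

Definition chain : {set Box m.+1} := [set chain_node (val k) | k : 'I_m.+1].

Lemma emb_chain_node k : (k <= m)%N -> emb (chain_node k) = stair f k.
Proof.
by move=> le_km; have sum_k := stair_xy f k; rewrite /emb /stair /= !inordK //; lia.
Qed.

Lemma chain_node_in k : (k <= m)%N -> chain_node k \in chain.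
Proof. by move=> le_km; apply/imsetP; exists (Ordinal (le_km : k < m.+1)%N). Qed.

Lemma occ_chainP w : reflect (exists2 k, (k <= m)%N & w = stair f k) (occ chain w).
Proof.
apply: (iffP existsP) => [[a /andP[/imsetP[k _ ->] /eqP <-]]|[k le_km ->]].
  by exists (val k); rewrite ?emb_chain_node ?leq_ord.
by exists (chain_node k); rewrite chain_node_in // emb_chain_node // eqxx.
Qed.

Lemma occ_chain_nbr j e : (j <= m)%N ->
  occ chain (addp (stair f j) (dir e)) =
  ((0 < j)%N && (e %% 6 == (f j.-1 + 3)%N)) || ((j < m)%N && (e %% 6 == f j)).
Proof.
move=> le_jm; apply/occ_chainP/idP => [[k le_km /esym/stair_nbr]|].
  by case=> -[eq_k e_mod]; subst; rewrite /= e_mod eqxx ?le_km ?orbT.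
case/orP => /andP[lt_j /eqP e_mod].
  exists j.-1; first by lia.
  by rewrite -dir_modn e_mod; case: j lt_j {le_jm e_mod} => // j _; rewrite /= [RHS]stair_pred.
by exists j.+1; rewrite // -dir_modn e_mod -stairS.
Qed.

Lemma card_chain : #|chain| = m.+1.
Proof.
rewrite card_imset ?card_ord // => j k /(congr1 (@emb m.+1)).
by rewrite !emb_chain_node ?leq_ord // => /stair_inj /val_inj.
Qed.

Lemma chain_normalized : normalized chain.
Proof. by split; exists (chain_node 0); rewrite chain_node_in //= inordK. Qed.

Lemma chain_connected : config_connected chain.
Proof.
have rel_succ k : (k < m)%N -> induced_rel chain (chain_node k) (chain_node k.+1).
  move=> lt_km; have le_km := ltnW lt_km.
  by rewrite /induced_rel !chain_node_in // !emb_chain_node // adj_stairS.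
have rel_pred k : (k < m)%N -> induced_rel chain (chain_node k.+1) (chain_node k).
  move=> lt_km; have le_km := ltnW lt_km.
  by rewrite /induced_rel !chain_node_in // !emb_chain_node // adj_stair_pred.
have connect0 k : (k <= m)%N ->
    connect (induced_rel chain) (chain_node 0) (chain_node k) /\
    connect (induced_rel chain) (chain_node k) (chain_node 0).
  elim: k => [|k IH] lt_km; first by split; apply: connect0.
  have [to_k from_k] := IH (ltnW lt_km).
  split; first exact: connect_trans to_k (connect1 (rel_succ k lt_km)).
  exact: connect_trans (connect1 (rel_pred k lt_km)) from_k.
move=> _ _ /imsetP[j _ ->] /imsetP[k _ ->].
exact: connect_trans (connect0 _ (leq_ord j)).2 (connect0 _ (leq_ord k)).1.
Qed.

(* Along directions 120 and 300 degrees [x + y] is constant, and the chain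
   meets each anti-diagonal [x + y = k] at most once: a free vertex sees
   infinity in one of these two directions. *)
Lemma chain_free_ray v : ~~ occ chain v ->
  exists k, forall t, ~~ occ chain (shift v (dir k) t).
Proof.
case: v => x y v_free.
case: (boolP [exists k : 'I_m.+1, Posz k == (x + y)%R]) => [/existsP[[k lt_km]]|].
  rewrite /= => /eqP diag_k; have sum_k := stair_xy f k.
  have ne_x : x != Posz (stair_x f k).
    apply: contra v_free => /eqP eq_x; apply/occ_chainP; exists k; first by [].
    by rewrite /stair eq_x; congr pair; lia.
  exists (if (x < Posz (stair_x f k))%R then 2%N else 5%N) => t.
  apply/occ_chainP => -[k' le_km']; rewrite /shift /stair; have := stair_xy f k'.
  case: ifP => /= lt_x sum_k' [eq_x eq_y]; have eq_k' : k' = k by lia.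
    by subst k'; lia.
  by subst k'; lia.
move=> off_chain; exists 5%N => t; apply/occ_chainP => -[k' le_km'].
have sum_k' := stair_xy f k'; rewrite /shift /stair /= => -[eq_x eq_y].
move/existsP: off_chain; apply; exists (Ordinal (le_km' : k' < m.+1)%N).
by apply/eqP => /=; lia.
Qed.

Lemma chain_hole_free : hole_free chain.
Proof. exact: hole_free_rays chain_free_ray. Qed.

Lemma chain_inOmega : inOmega chain.
Proof.
split; first exact: card_chain.
by split; [exact: chain_normalized | split; [exact: chain_connected | exact: chain_hole_free]].
Qed.

Definition fwd_edge j : pt * pt := (stair f j, stair f j.+1).
Definition bwd_edge j : pt * pt := (stair f j.+1, stair f j).

Lemma next_edge_fwd j : (j < m)%N ->
  next_edge chain (fwd_edge j) = if (j.+1 < m)%N then fwd_edge j.+1 else bwd_edge j.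
Proof.
move=> lt_jm; rewrite /fwd_edge [in X in next_edge _ X]stair_pred.
case: ifP => [lt_j1m | ge_j1m].
  rewrite (@next_edge_two_nbrs _ _ _ _ (f j.+1)) -?stairS //; try by case: (f _).
  by move=> k; rewrite occ_chain_nbr // lt_j1m.
rewrite (@next_edge_two_nbrs _ _ _ _ (f j + 3)) -?stair_pred //; try by case: (f _).
by move=> k; rewrite occ_chain_nbr // ge_j1m orbF orbb.
Qed.

Lemma next_edge_bwd j : (j < m)%N ->
  next_edge chain (bwd_edge j) = if (0 < j)%N then bwd_edge j.-1 else fwd_edge 0.
Proof.
move=> lt_jm; have le_jm := ltnW lt_jm; rewrite /bwd_edge [in X in next_edge _ X]stairS.
case: j lt_jm le_jm => [|j] lt_jm le_jm /=.
  rewrite (@next_edge_two_nbrs _ _ _ _ (f 0)) -?stairS //; try by case: (f _).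
  by move=> k; rewrite occ_chain_nbr // lt_jm orbb.
rewrite (@next_edge_two_nbrs _ _ _ _ (f j + 3)) -?stair_pred //; try by case: (f _).
by move=> k; rewrite occ_chain_nbr // lt_jm orbC.
Qed.

Lemma iter_next_edge_fwd k : (k < m)%N ->
  iter k (next_edge chain) (fwd_edge 0) = fwd_edge k.
Proof.
elim: k => // k IH lt_km; rewrite iterS IH ?next_edge_fwd ?lt_km //; exact: ltnW.
Qed.

Lemma iter_next_edge_bwd i : (i < m)%N ->
  iter (m + i) (next_edge chain) (fwd_edge 0) = bwd_edge (m.-1 - i).
Proof.
elim: i => [|i IH] lt_im.
  have m_eq : m = m.-1.+1 by lia.
  rewrite addn0 subn0 {1}m_eq iterS iter_next_edge_fwd ?next_edge_fwd; try lia.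
  by rewrite -m_eq ltnn.
rewrite addnS iterS IH 1?ltnW // next_edge_bwd; last by lia.
have -> : (0 < m.-1 - i)%N by lia.
by congr bwd_edge; lia.
Qed.

Lemma iter_next_edge_cycle : (0 < m)%N ->
  iter (2 * m) (next_edge chain) (fwd_edge 0) = fwd_edge 0.
Proof.
move=> m_gt0; have -> : (2 * m = (m + m.-1).+1)%N by lia.
by rewrite iterS iter_next_edge_bwd ?next_edge_bwd ?subnn //; lia.
Qed.

Lemma low_vertex_chain : exists2 v0, low_vertex chain = Some v0 & emb v0 = stair f 0.
Proof.
rewrite /low_vertex; case: pickP => [a /andP[_ /forallP low_a] | no_low].
  exists a => //; have := low_a (chain_node 0).
  rewrite chain_node_in //= inordK // ltn0 leqn0 /= => /andP[/eqP a1 /eqP a2].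
  by rewrite /emb /stair /= a1 a2.
have := no_low (chain_node 0); rewrite chain_node_in //= !inordK // => /negP[].
by apply/forallP => b; apply/implyP => _; case: (b.2 : nat).
Qed.

Lemma perim_chain : perim chain = (2 * m)%N.
Proof.
have [v0 low_v0 emb_v0] := low_vertex_chain.
rewrite /perim low_v0 /start_edge emb_v0 /=.
case: (posnP m) => [m0 | m_gt0].
  by rewrite occ_chain_nbr //= [X in (0 < X)%N]m0 /= m0.
have occ_start k :
    occ chain (addp (stair f 0) (dir k)) = (k %% 6 == f 0) || (k %% 6 == f 0).
  by rewrite occ_chain_nbr //= m_gt0 orbb.
have start : addp (stair f 0) (dir (nextdir chain (stair f 0) 5)) = stair f 1.
  by rewrite (@nextdir_two_nbrs _ _ _ _ _ occ_start 5) stairS -dir_modn; case: (f 0).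
rewrite start (_ : occ chain (stair f 1) = true); last by apply/occ_chainP; exists 1%N.
rewrite -/(fwd_edge 0) card_chain (@find_iota0_min _ _ (2 * m).-1); try lia.
  by rewrite -iterS prednK ?iter_next_edge_cycle ?muln_gt0 ?m_gt0.
move=> k lt_k; rewrite -iterS; apply/eqP => /(congr1 fst).
case: (ltnP k.+1 m) => [lt_k1m | ge_k1m].
  by rewrite iter_next_edge_fwd // => /stair_inj.
have -> : k.+1 = (m + (k.+1 - m))%N by lia.
by rewrite iter_next_edge_bwd => [/stair_inj|]; lia.
Qed.

End Chain.

Lemma chain_stair_eq {f g : nat -> bool} {m : nat} : chain f m = chain g m ->
  forall k, (k <= m)%N -> stair f k = stair g k.
Proof.
move=> eq_fg k le_km.
have : occ (chain g m) (stair f k) by rewrite -eq_fg; apply/occ_chainP; exists k.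
case/occ_chainP => k' _ eq_k.
have eq_kk' : k = k'.
  by move: eq_k (stair_xy f k) (stair_xy g k') => [eq_x eq_y]; lia.
by rewrite eq_k eq_kk'.
Qed.

Definition tuple_chain {m} (t : m.-tuple bool) : {set Box m.+1} := chain (nth false t) m.

Lemma tuple_chain_inj m : injective (@tuple_chain m).
Proof.
move=> t t' eq_tt'; apply: val_inj; apply: (@eq_from_nth _ false); rewrite ?size_tuple //.
move=> i lt_im; have := chain_stair_eq eq_tt' _ lt_im.
rewrite !stairS (chain_stair_eq eq_tt' _ (ltnW lt_im)) => /addpI /dir_inj.
by case: (nth false t i); case: (nth false t' i) => // /(_ isT isT).
Qed.

Local Open Scope ring_scope.

Theorem lemma18 (R : realType) (lam : R) (n : nat) :
  0 < lam -> (1 <= n)%N ->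
  (Num.sqrt 2 / lam) ^+ (2 * n - 2)%N
    <= \sum_(A : {set Box n} | `[< inOmega A >]) lam ^- perim A.
Proof.
move=> lam_gt0; case: n => // m _.
have -> : (2 * m.+1 - 2 = 2 * m)%N by lia.
have sum_chains :
    \sum_(t : m.-tuple bool) lam ^- perim (tuple_chain t) = 2 ^+ m * lam ^- (2 * m).
  under eq_bigr => t _ do rewrite perim_chain.
  by rewrite sumr_const card_tuple card_bool -[LHS]mulr_natl natrX.
rewrite exprMn exprVn exprM sqr_sqrtr ?ler0n // -sum_chains.
apply: ler_sum_inj => [||A _]; first exact: tuple_chain_inj.
  by move=> t; apply/asboolP; exact: chain_inOmega.
by rewrite invr_ge0 exprn_ge0 // ltW.
Qed.
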